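(* Let $n$ be a positive integer and let $G$ be a pure $(2n+1)$-sparse gapset of genus $g=3n+2$ with multiplicity $m$. If $G$ is pseudo-symmetric, then $m=2n+1$.
   Context: A gapset is a finite set $G\subset\mathbb{N}=\{1,2,\dots\}$ such that whenever $z\in G$ and $z=x+y$ with $x,y\in\mathbb{N}$, then $x\in G$ or $y\in G$; its genus is $g=\#G$. Writing $G=\{\ell_1<\dots<\ell_g\}$, multiplicity $m(G)=\min\{s\in\mathbb{N}:s\notin G\}$, Frobenius number $F(G)=\ell_g$; $G$ is pseudo-symmetric if $F(G)=2g-2$. $G$ is pure $\kappa$-sparse if $\ell_{i+1}-\ell_i\le\kappa$ for all $i$ with equality for some $i$. *)

From mathcomp Require Import all_boot.
Set Implicit Arguments. Unset Strict Implicit. Unset Printing Implicit Defensive.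

(* A finite set of positive naturals is represented by a duplicate-free seq nat. *)
Definition is_gapset (G : seq nat) : Prop :=
  [/\ uniq G, (forall z, z \in G -> 0 < z) &
      (forall x y, 0 < x -> 0 < y -> x + y \in G -> (x \in G) || (y \in G))].

Definition genus (G : seq nat) : nat := size G.

Definition gaps_sorted (G : seq nat) : seq nat := sort leq G.

Definition frobenius (G : seq nat) : nat := \max_(z <- G) z.

Lemma exists_nongap (G : seq nat) : exists s, (0 < s) && (s \notin G).
Proof.
exists (\max_(z <- G) z).+1; apply/andP; split => //.
apply/negP => h.
have := @leq_bigmax_seq _ G xpredT (fun z => z) _ h isT.
by rewrite ltnn.
Qed.

Definition multiplicity (G : seq nat) : nat := ex_minn (exists_nongap G).

Definition pseudo_symmetric (G : seq nat) : Prop :=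
  frobenius G = 2 * genus G - 2.

Definition pure_sparse (kappa : nat) (G : seq nat) : Prop :=
  let s := gaps_sorted G in
  (forall i, i.+1 < size s -> nth 0 s i.+1 - nth 0 s i <= kappa) /\
  (exists i, i.+1 < size s /\ nth 0 s i.+1 - nth 0 s i = kappa).

From mathcomp Require Import all_boot zify.

Set Implicit Arguments.
Unset Strict Implicit.
Unset Printing Implicit Defensive.

(* A gap b whose predecessor among the gaps is a must satisfy b - a <= m, for
   otherwise b - m is a non-gap and so is b = (b - m) + m.  Hence kappa <= m.
   Conversely, on [1, F] the map a |-> F - a sends non-gaps injectively to gaps
   other than F; for a pseudo-symmetric gapset this leaves room for at most
   one more gap, so two gaps y <> F - y summing to F cannot both exist.  With
   F = 6n + 2 and last gap difference F - l_{g-1} <= 2n + 1 < m, the gaps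
   l_{g-1} and F - l_{g-1} would be such a pair; so m <= 2n + 1. *)

Section Gapset.

Variable G : seq nat.
Hypothesis gapG : is_gapset G.

Lemma gap_gt0 z : z \in G -> 0 < z.
Proof. by case: gapG => _ + _; apply. Qed.

Lemma nongapD x y :
  0 < x -> 0 < y -> x \notin G -> y \notin G -> x + y \notin G.
Proof.
case: gapG => _ _ gap_split x_gt0 y_gt0 xG yG.
by apply/negP => /(gap_split _ _ x_gt0 y_gt0); rewrite (negbTE xG) (negbTE yG).
Qed.

Lemma leq_frobenius z : z \in G -> z <= frobenius G.
Proof. by move=> zG; apply: (@leq_bigmax_seq _ G xpredT id). Qed.

Lemma frobenius_mem : G != [::] -> frobenius G \in G.
Proof.
rewrite /frobenius; elim: G => // x [|y s] IH _; first by rewrite big_seq1 mem_head.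
rewrite big_cons /maxn; case: ltnP => _; last exact: mem_head.
by rewrite inE IH ?orbT.
Qed.

Lemma multiplicity_spec :
  [/\ 0 < multiplicity G, multiplicity G \notin G &
      forall x, 0 < x -> x < multiplicity G -> x \in G].
Proof.
rewrite /multiplicity; case: ex_minnP => m /andP[m_gt0 mG] m_min.
split=> // x x_gt0 x_lt_m; apply/negPn/negP => xG.
by have := m_min x; rewrite x_gt0 xG leqNgt x_lt_m => /(_ isT).
Qed.

Lemma count_gaps_below_frobenius :
  count (mem G) (iota 1 (frobenius G)) = genus G.
Proof.
case: (gapG) => uniqG _ _; rewrite -size_filter.
apply/perm_size/uniq_perm => [||z]; rewrite ?filter_uniq ?iota_uniq //.
rewrite mem_filter mem_iota /=; case zG: (z \in G) => //=.
by have := gap_gt0 zG; have := leq_frobenius zG; lia.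
Qed.

Lemma frobenius_subn_nongap a :
  a \notin G -> 0 < a < frobenius G -> frobenius G - a \in G.
Proof.
move=> aG /andP[a_gt0 a_lt_F]; apply/negPn/negP => FaG.
have FG : frobenius G \in G.
  by apply: frobenius_mem; apply/eqP => G0; move: a_lt_F; rewrite G0 /frobenius big_nil.
have Fa_gt0 : 0 < frobenius G - a by rewrite subn_gt0.
by have := nongapD a_gt0 Fa_gt0 aG FaG; rewrite subnKC ?FG // ltnW.
Qed.

(* The non-gaps a in [1, F] give the distinct gaps F - a, none of them F, y or F - y. *)
Lemma gap_pair_genus (y : nat) :
  y \in G -> frobenius G - y \in G -> y.*2 != frobenius G ->
  frobenius G + 3 <= (genus G).*2.
Proof.
set F := frobenius G => yG FyG y2_neq.
have FG : F \in G by apply: frobenius_mem; apply/eqP => G0; rewrite G0 in yG.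
have [y_gt0 Fy_gt0] := (gap_gt0 yG, gap_gt0 FyG).
set A : seq nat := [seq a <- iota 1 F | a \notin G].
have sizeA : size A + genus G = F.
  rewrite size_filter -count_gaps_below_frobenius addnC.
  by have := count_predC (mem G) (iota 1 F); rewrite size_iota.
have memA a : a \in A -> [/\ a \notin G, 0 < a & a < F].
  rewrite mem_filter mem_iota => /andP[aG a_range]; split => //; first lia.
  by rewrite ltn_neqAle; apply/andP; split; [apply: contraNneq aG => -> | lia].
pose refl := [seq F - a | a <- A].
have refl_gaps : {subset refl <= G}.
  move=> _ /mapP[a /memA[aG a_gt0 a_lt_F] ->].
  by apply: frobenius_subn_nongap; rewrite ?a_gt0.
have notA z : z \in G -> z \notin A by move=> zG; apply/negP => /memA[]; rewrite zG.
have notin_refl z : z <= F -> F - z \notin A -> (z \in refl) = false.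
  move=> z_le_F; apply: contraNF => /mapP[a aA ->].
  by have [_ _ a_lt_F] := memA a aA; rewrite subKn // ltnW.
have uniq_refl : uniq refl.
  rewrite map_inj_in_uniq ?filter_uniq ?iota_uniq //.
  by move=> a1 a2 /memA[_ _ ?] /memA[_ _ ?]; lia.
have uniq_pairs : uniq [:: F, y, F - y & refl].
  have zero_notA : 0 \notin A by apply/negP => /memA[].
  have y_le_F := leq_frobenius yG.
  rewrite /= uniq_refl !inE (notin_refl F) ?subnn // (notin_refl y) ?notA //.
  rewrite (notin_refl (F - y)) ?leq_subr ?subKn ?notA // !orbF !andbT.
  move: y2_neq; lia.
have pairs_gaps : {subset [:: F, y, F - y & refl] <= G}.
  by move=> z; rewrite !inE => /or3P[/eqP-> | /eqP-> | /orP[/eqP-> | /refl_gaps]].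
have := uniq_leq_size uniq_pairs pairs_gaps; rewrite /= size_map.
by rewrite -sizeA /genus; lia.
Qed.

Lemma nongap_between_consecutive i (c : nat) :
  i.+1 < size (gaps_sorted G) ->
  nth 0 (gaps_sorted G) i < c < nth 0 (gaps_sorted G) i.+1 -> c \notin G.
Proof.
rewrite /gaps_sorted -(mem_sort leq); set s := sort leq G => i_lt c_range.
apply/negP => cs.
have s_leq_nth := sorted_leq_nth leq_trans leqnn 0 (sort_sorted leq_total G).
have j_lt := index_mem c s; rewrite cs in j_lt.
have c_nth := nth_index 0 cs.
case: (leqP (index c s) i) => [j_le | i_lt_j].
- by have := s_leq_nth _ _ j_lt (ltnW i_lt) j_le; rewrite -/s c_nth; lia.
- by have := s_leq_nth _ _ i_lt j_lt i_lt_j; rewrite -/s c_nth; lia.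
Qed.

Lemma consecutive_gap_diff_le_multiplicity i :
  i.+1 < size (gaps_sorted G) ->
  nth 0 (gaps_sorted G) i.+1 - nth 0 (gaps_sorted G) i <= multiplicity G.
Proof.
set a := nth 0 _ i; set b := nth 0 _ i.+1 => i_lt; rewrite leqNgt; apply/negP => m_lt.
have [m_gt0 mG _] := multiplicity_spec.
have bG : b \in G by rewrite -(mem_sort leq) mem_nth.
have c_notin : b - multiplicity G \notin G.
  by apply: (nongap_between_consecutive i_lt); rewrite -/a -/b; lia.
have c_gt0 : 0 < b - multiplicity G by lia.
by have := nongapD c_gt0 m_gt0 c_notin mG; rewrite subnK ?bG //; lia.
Qed.

Lemma gaps_sorted_ltn : sorted ltn (gaps_sorted G).
Proof.
case: gapG => uniqG _ _.
by rewrite ltn_sorted_uniq_leq sort_uniq uniqG sort_sorted //; apply: leq_total.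
Qed.

Lemma nth_last_gaps_sorted :
  0 < genus G -> nth 0 (gaps_sorted G) (genus G).-1 = frobenius G.
Proof.
move=> g_gt0; set s := gaps_sorted G.
have size_s : size s = genus G by rewrite size_sort.
have last_lt : (genus G).-1 < size s by rewrite size_s prednK.
have last_mem : nth 0 s (genus G).-1 \in G by rewrite -(mem_sort leq) mem_nth.
apply/eqP; rewrite eqn_leq leq_frobenius //=.
have Fs : frobenius G \in s.
  by rewrite mem_sort frobenius_mem // -size_eq0 -lt0n.
rewrite -{1}(nth_index 0 Fs).
apply: (sorted_leq_nth leq_trans leqnn 0 (sort_sorted leq_total G)) => //.
  by rewrite inE index_mem.
by rewrite -ltnS prednK // -size_s index_mem.
Qed.

Lemma pure_sparse_le_multiplicity kappa :
  pure_sparse kappa G -> kappa <= multiplicity G.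
Proof. by case=> _ [i [i_lt <-]]; apply: consecutive_gap_diff_le_multiplicity. Qed.

Lemma multiplicity_le_last_gap_diff :
  pseudo_symmetric G -> 1 < genus G ->
  (nth 0 (gaps_sorted G) (genus G).-2).*2 != frobenius G ->
  multiplicity G <= frobenius G - nth 0 (gaps_sorted G) (genus G).-2.
Proof.
rewrite /pseudo_symmetric => F_eq g_gt1; set a := nth 0 _ _ => a2_neq.
have size_s : size (gaps_sorted G) = genus G by rewrite size_sort.
have aG : a \in G by rewrite -(mem_sort leq) mem_nth // size_s; lia.
have a_lt_F : a < frobenius G.
  rewrite -nth_last_gaps_sorted; last lia.
  by apply: (sorted_ltn_nth ltn_trans 0 gaps_sorted_ltn); rewrite ?inE /= ?size_s; lia.
rewrite leqNgt; apply/negP => diff_lt_m.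
have [_ _ below_m] := multiplicity_spec.
have Fa_gt0 : 0 < frobenius G - a by rewrite subn_gt0.
by have := gap_pair_genus aG (below_m _ Fa_gt0 diff_lt_m) a2_neq; rewrite F_eq; lia.
Qed.

End Gapset.

Theorem mainTheorem12 (n : nat) (G : seq nat) :
  0 < n -> is_gapset G -> pure_sparse (2 * n + 1) G ->
  genus G = 3 * n + 2 -> pseudo_symmetric G ->
  multiplicity G = 2 * n + 1.
Proof.
move=> n_gt0 gapG sparse g_eq pseudo.
have kappa_le_m := pure_sparse_le_multiplicity gapG sparse.
have size_s : size (gaps_sorted G) = (3 * n).+2 by rewrite size_sort -addn2.
have F_eq : frobenius G = 6 * n + 2 by move: pseudo; rewrite /pseudo_symmetric g_eq; lia.
have last_eq : nth 0 (gaps_sorted G) (3 * n).+1 = frobenius G.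
  by rewrite -nth_last_gaps_sorted // g_eq addn2.
have last_diff : frobenius G - nth 0 (gaps_sorted G) (3 * n) <= 2 * n + 1.
  by rewrite -last_eq; apply: sparse.1; rewrite size_s.
have := multiplicity_le_last_gap_diff gapG pseudo; rewrite g_eq addn2 /=.
lia.
Qed.
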